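(* Fix $\alpha\in(0,1)$ and an integer $d\ge1$, and define \[ \gamma^L_0(t_1,t_2,\alpha)=\frac{(t_1-d)\,t_2}{\left(\frac{\alpha^2}{t_2+1}\right)^{\frac{1}{t_1-d+1}}(t_2+1)-1}-(t_1-d). \] Suppose $t_1,t_2\to\infty$ and there exist constants $0<r<R<\infty$ with $r\le t_1/t_2\le R$. Then $\gamma^L_0(t_1,t_2,\alpha)=2\log(1/\alpha)+\log(t_2+1)+o(1)$. *)

From Stdlib Require Import Reals.
Open Scope R_scope.

Definition gammaL0 (d : nat) (t1 t2 alpha : R) : R :=
  (t1 - INR d) * t2 /
    (Rpower (alpha ^ 2 / (t2 + 1)) (1 / (t1 - INR d + 1)) * (t2 + 1) - 1)
  - (t1 - INR d).

From Stdlib Require Import Reals Lra Psatz.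
Open Scope R_scope.

(** With [N := t1 - d + 1], [m := t2 + 1] and [L := 2 ln(1/alpha) + ln m],
    the power in [gammaL0] is [exp (- x)] with [x = L / N], so
    [gammaL0 = (N - 1)(m - 1) / (exp(-x) m - 1) - (N - 1)].  Since
    [exp(-x) = 1 - x + O(x^2)] and [x N = L], the error [gammaL0 - L] is a
    fraction whose denominator is of order [m] and whose numerator is
    [O((L + L^2) / kappa)] once [N >= kappa m]; the ratio bound gives this
    with [kappa = r / 2].  As [L = O(ln m)], the error is [O((ln m)^2 / m)]. *)

Lemma ln_gt_0 (x : R) : 1 < x -> 0 < ln x.
Proof. intros Hx; rewrite <- ln_1; apply ln_increasing; lra. Qed.

Lemma exp_neg_bounds (x : R) : 0 <= x -> 1 - x <= exp (- x) <= 1 - x + x ^ 2.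
Proof.
  intros Hx.
  pose proof (exp_ineq1_le (- x)) as Hlow.
  pose proof (exp_ineq1_le x) as Hup.
  assert (Hinv : exp (- x) * exp x = 1)
    by (rewrite <- exp_plus, Rplus_opp_l; exact exp_0).
  pose proof (exp_pos (- x)).
  split; nra.
Qed.

Lemma perturbed_pole_error (kappa m N x u : R) :
  0 < kappa -> 4 <= m -> kappa * m <= N -> 1 <= N -> 0 < x <= 1 / 2 ->
  1 - x <= u <= 1 - x + x ^ 2 ->
  Rabs ((N - 1) * (m - 1) / (u * m - 1) - (N - 1) - x * N)
    <= 4 * (1 + 3 / kappa) * (x * N + (x * N) ^ 2) / m.
Proof.
  intros Hk Hm HN HN1 [Hx0 Hx12] [Hu1 Hu2].
  set (L := x * N).
  set (D := u * m - 1).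
  set (delta := u - 1 + x).
  assert (HD : m / 4 <= D) by (unfold D; nra).
  assert (HL0 : 0 <= L) by (unfold L; nra).
  assert (Hxm : x * m <= L / kappa).
  { apply Rmult_le_reg_r with kappa; [lra|].
    replace (L / kappa * kappa) with L by (field; lra); unfold L; nra. }
  assert (HmxL : m * x * L <= L ^ 2 / kappa).
  { replace (L ^ 2 / kappa) with (L / kappa * L) by (unfold Rdiv; ring). nra. }
  assert (Hdelta : 0 <= m * delta * (N - 1 + L) <= 3 / 2 * (m * x * L)).
  { assert (0 <= delta <= x ^ 2) by (unfold delta; lra).
    assert (N - 1 + L <= 3 / 2 * N) by (unfold L; nra).
    assert (0 <= m * N) by nra.
    split; [apply Rmult_le_pos; nra|].
    replace (m * x * L) with (m * x ^ 2 * N) by (unfold L; ring).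
    apply Rle_trans with (m * delta * (3 / 2 * N));
      [apply Rmult_le_compat_l|]; nra. }
  assert (Hnum : Rabs (x * (N - m) + m * x * L - m * delta * (N - 1 + L))
                   <= (1 + 3 / kappa) * (L + L ^ 2)).
  { assert (L / kappa + L ^ 2 / kappa * (5 / 2) <= 3 / kappa * (L + L ^ 2)).
    { unfold Rdiv. assert (0 < / kappa) by (apply Rinv_0_lt_compat; lra). nra. }
    apply Rabs_le; split; unfold L in *; nra. }
  replace ((N - 1) * (m - 1) / D - (N - 1) - L)
    with ((x * (N - m) + m * x * L - m * delta * (N - 1 + L)) / D)
    by (unfold L, delta, D; field; unfold D in HD; lra).
  unfold Rdiv at 1; rewrite Rabs_mult, Rabs_inv, (Rabs_pos_eq D) by lra.
  apply Rle_trans with ((1 + 3 / kappa) * (L + L ^ 2) / (m / 4)).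
  - unfold Rdiv; apply Rmult_le_compat.
    + apply Rabs_pos.
    + apply Rlt_le, Rinv_0_lt_compat; lra.
    + exact Hnum.
    + apply Rinv_le_contravar; lra.
  - right; field; lra.
Qed.

Lemma exp_pole_error (kappa m N L : R) :
  0 < kappa -> 4 <= m -> kappa * m <= N -> 1 <= N -> 0 < L -> 2 * L <= N ->
  Rabs ((N - 1) * (m - 1) / (exp (- (L / N)) * m - 1) - (N - 1) - L)
    <= 4 * (1 + 3 / kappa) * (L + L ^ 2) / m.
Proof.
  intros Hk Hm HN HN1 HL HLN.
  assert (HxN : L / N * N = L) by (field; lra).
  rewrite <- HxN at 2 3 4.
  apply perturbed_pole_error; try assumption.
  - split; [apply Rdiv_lt_0_compat | apply Rmult_le_reg_r with N; rewrite ?HxN]; lra.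
  - apply exp_neg_bounds, Rlt_le, Rdiv_lt_0_compat; lra.
Qed.

Lemma Rpower_sq_div (a m p : R) : 0 < a -> 0 < m ->
  Rpower (a ^ 2 / m) p = exp (- (p * (2 * ln (1 / a) + ln m))).
Proof.
  intros Ha Hm; unfold Rpower, Rdiv; f_equal.
  rewrite ln_mult, ln_pow, ln_Rinv, Rmult_1_l, ln_Rinv
    by (try apply pow_lt; try apply Rinv_0_lt_compat; lra).
  simpl INR; ring.
Qed.

Lemma gammaL0_error_le (d : nat) (t1 t2 alpha kappa e : R) :
  let m := t2 + 1 in let N := t1 - INR d + 1 in
  let L := 2 * ln (1 / alpha) + ln m in
  0 < alpha -> 0 < kappa -> 4 <= m -> kappa * m <= N -> 1 <= N -> 0 < L ->
  L + L ^ 2 <= e * m -> e <= kappa / 2 ->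
  Rabs (gammaL0 d t1 t2 alpha - L) <= 4 * (1 + 3 / kappa) * e.
Proof.
  intros m N L Halpha Hk Hm HN HN1 HL HLe Hek.
  assert (HLN : 2 * L <= N) by nra.
  assert (HLm : (L + L ^ 2) / m <= e).
  { apply Rmult_le_reg_r with m; [lra|].
    replace ((L + L ^ 2) / m * m) with (L + L ^ 2) by (field; lra); lra. }
  unfold gammaL0; rewrite Rpower_sq_div by (unfold m in Hm; lra); fold m N L.
  replace (- (1 / N * L)) with (- (L / N)) by (unfold Rdiv; ring).
  replace (t1 - INR d) with (N - 1) by (unfold N; ring).
  replace t2 with (m - 1) at 1 by (unfold m; ring).
  eapply Rle_trans; [exact (exp_pole_error kappa m N L Hk Hm HN HN1 HL HLN)|].
  unfold Rdiv; rewrite Rmult_assoc; apply Rmult_le_compat_l; [|exact HLm].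
  assert (0 < 3 / kappa) by (apply Rdiv_lt_0_compat; lra); lra.
Qed.

Lemma ln_plus_sq_eventually_le (c e : R) : 0 <= c -> 0 < e ->
  exists M : R, forall m : R, M <= m -> (c + ln m) + (c + ln m) ^ 2 <= e * m.
Proof.
  intros Hc He.
  set (k := 4 + c).
  set (a := 2 * k ^ 2 / e).
  exists (2 + a ^ 2); intros m Hm.
  assert (Hm1 : 1 < m) by nra.
  (* [q = m^(1/4)] and [ln m <= 4 q], so [L + L^2 = O(q^2) = O(sqrt m)]. *)
  set (q := exp (ln m / 4)).
  assert (Hq4 : q ^ 4 = m).
  { unfold q; simpl; rewrite Rmult_1_r, <- !exp_plus.
    replace (ln m / 4 + (ln m / 4 + (ln m / 4 + ln m / 4))) with (ln m) by field.
    apply exp_ln; lra. }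
  assert (Hln0 : 0 < ln m) by (apply ln_gt_0; lra).
  assert (Hlnq : 1 + ln m / 4 <= q) by apply exp_ineq1_le.
  assert (HlnL : 0 <= c + ln m <= k * q) by (unfold k; nra).
  assert (Hq2 : a <= q ^ 2).
  { destruct (Rle_lt_dec a (q ^ 2)) as [|Hlt]; [assumption|].
    assert (q ^ 2 * q ^ 2 < a * a) by (apply Rmult_le_0_lt_compat; nra).
    assert (q ^ 4 = q ^ 2 * q ^ 2) by ring.
    assert (a ^ 2 = a * a) by ring.
    lra. }
  assert (Ha : a * e = 2 * k ^ 2) by (unfold a; field; lra).
  assert (Hkq : 2 * k ^ 2 * q ^ 2 <= e * m).
  { rewrite <- Ha, <- Hq4.
    replace (e * q ^ 4) with (e * q ^ 2 * q ^ 2) by ring.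
    apply Rmult_le_compat_r; nra. }
  assert (Hkq1 : 1 <= k * q) by (unfold k; nra).
  assert (Hsq : (c + ln m) ^ 2 <= (k * q) ^ 2) by (apply pow_incr; lra).
  assert (k * q <= (k * q) ^ 2) by nra.
  assert ((k * q) ^ 2 = k ^ 2 * q ^ 2) by ring.
  lra.
Qed.

Lemma half_ratio_shift_le (r d t1 t2 : R) :
  0 < r -> 0 < t2 -> r <= t1 / t2 -> 2 * d / r + 1 <= t2 ->
  r / 2 * (t2 + 1) <= t1 - d + 1.
Proof.
  intros Hr Ht2 Hrt Hdt.
  assert (Ht1 : r * t2 <= t1).
  { apply Rmult_le_reg_r with (/ t2); [apply Rinv_0_lt_compat; lra|].
    rewrite Rmult_assoc, Rinv_r by lra; lra. }
  assert (Hdr : r * (2 * d / r) = 2 * d) by (field; lra).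
  nra.
Qed.

Theorem proposition2 (alpha : R) (d : nat) (r Rb : R) :
  0 < alpha < 1 -> (1 <= d)%nat -> 0 < r -> r < Rb ->
  forall eps : R, 0 < eps ->
  exists M : R, forall t1 t2 : R,
    M <= t1 -> M <= t2 -> r <= t1 / t2 <= Rb ->
    Rabs (gammaL0 d t1 t2 alpha - (2 * ln (1 / alpha) + ln (t2 + 1))) < eps.
Proof.
  intros Halpha _ Hr _ eps Heps.
  pose proof (pos_INR d).
  assert (Hc : 0 < 2 * ln (1 / alpha)).
  { assert (Hln : ln alpha < ln 1) by (apply ln_increasing; lra).
    rewrite ln_1 in Hln; unfold Rdiv; rewrite Rmult_1_l, ln_Rinv by lra; lra. }
  set (kappa := r / 2); set (K := 4 * (1 + 3 / kappa)).
  assert (Hkappa : 0 < kappa) by (unfold kappa; lra).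
  assert (HK : 0 < K)
    by (unfold K; assert (0 < 3 / kappa) by (apply Rdiv_lt_0_compat; lra); lra).
  set (e := Rmin (kappa / 2) (eps / (2 * K))).
  assert (He : 0 < e) by (apply Rmin_pos; apply Rdiv_lt_0_compat; lra).
  destruct (ln_plus_sq_eventually_le (2 * ln (1 / alpha)) e) as [M0 HM0]; try lra.
  assert (Hdr : 0 <= 2 * INR d / r)
    by (apply Rmult_le_pos; [lra | left; apply Rinv_0_lt_compat; lra]).
  exists (Rmax M0 (3 + INR d + 2 * INR d / r)); intros t1 t2 Ht1 Ht2 [Hrt _].
  pose proof (Rmax_l M0 (3 + INR d + 2 * INR d / r)).
  pose proof (Rmax_r M0 (3 + INR d + 2 * INR d / r)).
  apply Rle_lt_trans with (K * e).
  - apply gammaL0_error_le; try lra.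
    + apply half_ratio_shift_le; lra.
    + assert (0 < ln (t2 + 1)) by (apply ln_gt_0; lra); lra.
    + apply HM0; lra.
    + apply Rmin_l.
  - assert (K * e <= K * (eps / (2 * K))) by (apply Rmult_le_compat_l, Rmin_r; lra).
    replace (K * (eps / (2 * K))) with (eps / 2) in * by (field; lra); lra.
Qed.
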